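(* Let $f_1,f_2$ be strongly hyperbolic functions, $a_0>0$, $b_0,c_0\in\mathbb{R}$, $C=\overline{f_{a_0,b_0,c_0}}$ and $p=(-b_0,\infty)$. Let $q\in\mathcal{P}$ with $q\notin C$ and $q$ not parallel to $p$. Then there exist $a_1>0$, $b_1,c_1\in\mathbb{R}$ such that $D=\overline{f_{a_1,b_1,c_1}}$ contains $p$ and $q$ and $C\cap D=\{p\}$.
   Context: Identify $\mathbb{S}^1$ with $\mathbb{R}\cup\{\infty\}$, $\mathcal{P}=\mathbb{S}^1\times\mathbb{S}^1$, $\mathbb{R}^+=(0,\infty)$. Two points of $\mathcal{P}$ are parallel if they have the same first coordinate or the same second coordinate. A function $f:\mathbb{R}^+\to\mathbb{R}^+$ is strongly hyperbolic if: (1) $\lim_{x\to0+}f(x)=+\infty$, $\lim_{x\to+\infty}f(x)=0$; (2) $f$ strictly convex; (3) $\lim_{x\to+\infty}f(x+b)/f(x)=1$ for each $b\in\mathbb{R}$; (4) $f$ differentiable; (5) $\ln|f'|$ strictly convex. For $a>0$, $b,c\in\mathbb{R}$: $f_{a,b,c}(x)=af_1(x+b)+c$ for $x>-b$, $f_{a,b,c}(x)=-af_2(-x-b)+c$ for $x<-b$; $\overline{f_{a,b,c}}=\{(x,f_{a,b,c}(x)):x\ne-b\}\cup\{(-b,\infty),(\infty,c)\}$. *)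

From Stdlib Require Import Reals.
From Coquelicot Require Import Coquelicot.
Open Scope R_scope.

(* S^1 = R ∪ {∞}: None stands for ∞. *)
Definition S1 := option R.
Definition Pt := (S1 * S1)%type.

Definition parallel (p q : Pt) : Prop := fst p = fst q \/ snd p = snd q.

(* f : R^+ -> R^+, represented by a total function R -> R whose values
   are only relevant on (0, +oo). *)
Definition strictly_convex_pos (g : R -> R) : Prop :=
  forall x y t, 0 < x -> 0 < y -> x <> y -> 0 < t < 1 ->
    g (t * x + (1 - t) * y) < t * g x + (1 - t) * g y.

Definition strongly_hyperbolic (f : R -> R) : Prop :=
  (forall x, 0 < x -> 0 < f x) /\
  filterlim f (at_right 0) (Rbar_locally p_infty) /\
  is_lim f p_infty 0 /\
  strictly_convex_pos f /\
  (forall b : R, is_lim (fun x => f (x + b) / f x) p_infty 1) /\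
  (forall x, 0 < x -> ex_derive f x) /\
  strictly_convex_pos (fun x => ln (Rabs (Derive f x))).

(* f_{a,b,c} built from f1, f2 (value at x = -b is irrelevant). *)
Definition fabc (f1 f2 : R -> R) (a b c : R) (x : R) : R :=
  if Rlt_dec (- b) x then a * f1 (x + b) + c else - a * f2 (- x - b) + c.

Definition fabc_bar (f1 f2 : R -> R) (a b c : R) (r : Pt) : Prop :=
  (exists x : R, x <> - b /\ r = (Some x, Some (fabc f1 f2 a b c x))) \/
  r = (Some (- b), None) \/
  r = (None, Some c).

From Stdlib Require Import Reals Lra.
From Coquelicot Require Import Coquelicot.
Open Scope R_scope.

(* The curve D can be taken to be a vertical translate of C: all translates
   pass through the pole (-b0, ∞), two distinct translates meet nowhere else
   (their finite parts differ by a nonzero constant and their horizontal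
   asymptotes differ), and a point not parallel to the pole lies on exactly
   one translate. No property of f1 and f2 is needed. *)

Lemma fabc_addc (f1 f2 : R -> R) (a b c x : R) :
  fabc f1 f2 a b c x = fabc f1 f2 a b 0 x + c.
Proof. unfold fabc; destruct (Rlt_dec (- b) x); ring. Qed.

Lemma fabc_bar_pole (f1 f2 : R -> R) (a b c : R) :
  fabc_bar f1 f2 a b c (Some (- b), None).
Proof. right; left; reflexivity. Qed.

Lemma fabc_bar_translate_meet (f1 f2 : R -> R) (a b c c' : R) (Hcc' : c <> c')
  (r : Pt) :
  fabc_bar f1 f2 a b c r /\ fabc_bar f1 f2 a b c' r <-> r = (Some (- b), None).
Proof.
  split.
  - intros [[[x [_ ->]] | [-> | ->]] Hr'].
    + destruct Hr' as [[x' [_ E]] | [E | E]]; try discriminate.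
      injection E as <- E.
      rewrite (fabc_addc _ _ _ _ c), (fabc_addc _ _ _ _ c') in E; lra.
    + reflexivity.
    + destruct Hr' as [[x' [_ E]] | [E | E]]; try discriminate.
      injection E as E; congruence.
  - intros ->; split; apply fabc_bar_pole.
Qed.

Lemma fabc_bar_translate_through (f1 f2 : R -> R) (a b : R) (q : Pt)
  (Hq : ~ parallel q (Some (- b), None)) :
  exists c, fabc_bar f1 f2 a b c q.
Proof.
  unfold parallel in Hq; destruct q as [[x|] [y|]]; simpl in Hq;
    try (exfalso; apply Hq; right; reflexivity).
  - exists (y - fabc f1 f2 a b 0 x); left; exists x; split.
    + intros ->; apply Hq; left; reflexivity.
    + rewrite fabc_addc; do 2 f_equal; ring.
  - exists y; right; right; reflexivity.
Qed.

Theorem lemma4p10 (f1 f2 : R -> R)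
  (Hf1 : strongly_hyperbolic f1) (Hf2 : strongly_hyperbolic f2)
  (a0 b0 c0 : R) (Ha0 : 0 < a0) (q : Pt)
  (HqC : ~ fabc_bar f1 f2 a0 b0 c0 q)
  (Hqp : ~ parallel q (Some (- b0), None)) :
  exists a1 b1 c1 : R, 0 < a1 /\
    fabc_bar f1 f2 a1 b1 c1 (Some (- b0), None) /\
    fabc_bar f1 f2 a1 b1 c1 q /\
    (forall r : Pt, (fabc_bar f1 f2 a0 b0 c0 r /\ fabc_bar f1 f2 a1 b1 c1 r)
                    <-> r = (Some (- b0), None)).
Proof.
  destruct (fabc_bar_translate_through f1 f2 a0 b0 q Hqp) as [c1 HqD].
  assert (Hc : c0 <> c1) by (intros <-; exact (HqC HqD)).
  exists a0, b0, c1.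
  split; [exact Ha0 | split; [apply fabc_bar_pole | split; [exact HqD |]]].
  intros r; apply fabc_bar_translate_meet; exact Hc.
Qed.
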